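(* For every integer $n\ge 1$, $\mathfrak D^1_{2n}(231,4213)=\{(2,1,4,3,\dots,2n,2n-1)\}$, i.e. the only Dumont permutation of the first kind of length $2n$ avoiding both $231$ and $4213$ is the permutation $\pi$ with $\pi(2i-1)=2i$, $\pi(2i)=2i-1$ for $i=1,\dots,n$.
   Context: A Dumont permutation of the first kind of length $2n$ is a permutation $\pi\in\mathfrak S_{2n}$ such that for every $i=1,\dots,2n$: if $\pi(i)$ is even then $i<2n$ and $\pi(i)>\pi(i+1)$; if $\pi(i)$ is odd then $i=2n$ or $\pi(i)<\pi(i+1)$. $\mathfrak D^1_{2n}$ denotes the set of these. A permutation $\sigma$ contains a pattern $\tau\in\mathfrak S_k$ if some subsequence $(\sigma(i_1),\dots,\sigma(i_k))$, $i_1<\dots<i_k$, is order-isomorphic to $\tau$; otherwise $\sigma$ avoids $\tau$. $\mathfrak D^1_{2n}(T)$ denotes the set of permutations in $\mathfrak D^1_{2n}$ avoiding every pattern in $T$. Permutations are written in one-line notation. *)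

From mathcomp Require Import all_boot all_fingroup.
Set Implicit Arguments. Unset Strict Implicit. Unset Printing Implicit Defensive.

(* Permutations of {1,...,m} are represented as s : 'S_m acting on 'I_m = {0,...,m-1};
   position i (1-based) corresponds to the ordinal i-1 and the value pi(i) = (s (i-1)) + 1.
   Hence "pi(i) is even" iff the 0-based value (s _) is odd. *)

Definition dumont1 (m : nat) (s : 'S_m) : Prop :=
  forall (i : 'I_m),
    if odd (s i) (* pi(i) even *)
    then exists h : i.+1 < m, s (Ordinal h) < s i
    else forall h : i.+1 < m, s i < s (Ordinal h).

Definition contains_pat (m : nat) (s : 'S_m) (tau : seq nat) : Prop :=
  exists f : 'I_(size tau) -> 'I_m,
    (forall a b : 'I_(size tau), a < b -> f a < f b) /\
    (forall a b : 'I_(size tau),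
        (s (f a) < s (f b)) = (nth 0 tau a < nth 0 tau b)).

Definition avoids_pat (m : nat) (s : 'S_m) (tau : seq nat) : Prop :=
  ~ contains_pat s tau.

(* the patterns 231 and 4213, written 0-based *)
Definition pat231 : seq nat := [:: 1; 2; 0].
Definition pat4213 : seq nat := [:: 3; 1; 0; 2].

From mathcomp Require Import all_boot all_fingroup zify.

Set Implicit Arguments.
Unset Strict Implicit.
Unset Printing Implicit Defensive.

(* The involution 2 1 4 3 ... is Dumont, and all its inversions are between
   adjacent positions, while 231 and 4213 both invert their first and third,
   non-adjacent, letters.  Conversely, let pi be Dumont and avoid both patterns,
   and suppose pi agrees with 2 1 4 3 ... on the first 2j positions, so that it
   maps the other positions onto the values above 2j.  The even value 2j+2 must
   be followed by a smaller value, necessarily 2j+1.  If this pair does not sit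
   at positions 2j+1, 2j+2, the value c right before it must be even (an odd c
   would be below 2j+2), so c >= 2j+4; then c-1 occurs either before c, giving
   the 231 pattern (c-1, c, 2j+1), or after the pair, giving the 4213 pattern
   (c, 2j+2, 2j+1, c-1). *)

Definition partner (i : nat) : nat := if odd i then i.-1 else i.+1.

Lemma odd_partner i : odd (partner i) = ~~ odd i.
Proof.
by rewrite /partner; case: i => //= i; case: (boolP (odd i)) => /= [->|/negPf].
Qed.

Lemma partnerK : involutive partner.
Proof.
by move=> i; rewrite {1}/partner odd_partner /partner; case: i => [|i] //=; case: (odd i).
Qed.

Lemma partner_lt_double i j : i < j.*2 -> partner i < j.*2.
Proof.
rewrite /partner; have := odd_double_half i; case: (odd i) => /= i_eq; lia.
Qed.

Lemma partner_inversion_adjacent x z :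
  x < z -> partner z < partner x -> z = x.+1.
Proof.
rewrite /partner; have := odd_double_half x; have := odd_double_half z.
by case: (odd x); case: (odd z) => /= z_eq x_eq; lia.
Qed.

Lemma contains_pat_far_inversion m (s : 'S_m) tau a b c :
  a < b -> b < c -> c < size tau -> nth 0 tau c < nth 0 tau a ->
  contains_pat s tau -> exists x z : 'I_m, x.+1 < z /\ s z < s x.
Proof.
move=> lt_ab lt_bc lt_c tau_ca [f [f_mono f_pat]].
have lt_b := ltn_trans lt_bc lt_c; have lt_a := ltn_trans lt_ab lt_b.
exists (f (Ordinal lt_a)), (f (Ordinal lt_c)); split; last by rewrite f_pat.
have := f_mono (Ordinal lt_a) (Ordinal lt_b) lt_ab.
have := f_mono (Ordinal lt_b) (Ordinal lt_c) lt_bc.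
lia.
Qed.

Lemma contains231 m (s : 'S_m) (x y z : 'I_m) :
  x < y -> y < z -> s z < s x -> s x < s y -> contains_pat s pat231.
Proof.
move=> xy yz zx xy'; exists (fun a : 'I_3 => nth x [:: x; y; z] a); split.
  by move=> [[|[|[|?]]] ?] [[|[|[|?]]] ?] //= _; lia.
by move=> [[|[|[|?]]] ?] [[|[|[|?]]] ?] //=; apply/idP/idP; lia.
Qed.

Lemma contains4213 m (s : 'S_m) (w x y z : 'I_m) :
  w < x -> x < y -> y < z -> s y < s x -> s x < s z -> s z < s w ->
  contains_pat s pat4213.
Proof.
move=> wx xy yz yx xz zw; exists (fun a : 'I_4 => nth w [:: w; x; y; z] a); split.
  by move=> [[|[|[|[|?]]]] ?] [[|[|[|[|?]]]] ?] //= _; lia.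
by move=> [[|[|[|[|?]]]] ?] [[|[|[|[|?]]]] ?] //=; apply/idP/idP; lia.
Qed.

Lemma perm_val_surj m (s : 'S_m) v : v < m -> exists x : 'I_m, s x = v :> nat.
Proof. by move=> lt_vm; exists ((s^-1)%g (Ordinal lt_vm)); rewrite permKV. Qed.

Definition partner_on m (s : 'S_m) (k : nat) : Prop :=
  forall i : 'I_m, i < k -> s i = partner i :> nat.

Section PartnerPrefix.

Variables (m j : nat) (s : 'S_m).
Hypotheses (le_prefix : j.*2 <= m) (prefix : partner_on s j.*2).

Lemma partner_on_lt (x : 'I_m) : (s x < j.*2) = (x < j.*2).
Proof.
apply/idP/idP => lt_x; last by rewrite prefix ?partner_lt_double.
have lt_y : partner (s x) < m by have := partner_lt_double lt_x; lia.
have y_x : Ordinal lt_y = x.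
  apply: (@perm_inj _ s); apply: val_inj.
  by rewrite /= prefix /= ?partnerK // partner_lt_double.
by rewrite -y_x partner_lt_double.
Qed.

Lemma partner_on_ge (x : 'I_m) : (j.*2 <= s x) = (j.*2 <= x).
Proof. by rewrite leqNgt partner_on_lt -leqNgt. Qed.

Section DumontStep.

Hypotheses (dumont : dumont1 s) (room : j.*2.+1 < m).
Hypotheses (avoid231 : avoids_pat s pat231) (avoid4213 : avoids_pat s pat4213).

Lemma top_pair_adjacent :
  exists (q : 'I_m) (h : q.+1 < m),
    s q = j.*2.+1 :> nat /\ s (Ordinal h) = j.*2 :> nat.
Proof.
have [q sq] := perm_val_surj s room.
have q_ge : j.*2 <= q by rewrite -partner_on_ge sq.
have := dumont q; rewrite sq /= odd_double /= => -[h lt_next].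
exists q, h; split => //.
have : j.*2 <= s (Ordinal h) by rewrite partner_on_ge /= leqW.
lia.
Qed.

Lemma top_pair_pred_large (q : 'I_m) (h : q.+1 < m) (lt_b : q.-1 < m) :
  s q = j.*2.+1 :> nat -> s (Ordinal h) = j.*2 :> nat -> j.*2 < q ->
  j.*2.+2 < s (Ordinal lt_b).
Proof.
move=> sq sp q_gt; set b := Ordinal lt_b.
have b_ge : j.*2 <= s b by rewrite partner_on_ge /=; lia.
have b_ne_q : s b <> s q :> nat by move/val_inj/perm_inj/(congr1 val) => /=; lia.
have b_ne_p : s b <> s (Ordinal h) :> nat.
  by move/val_inj/perm_inj/(congr1 val) => /=; lia.
have b_odd : odd (s b).
  apply: contraT => b_even; have := dumont b; rewrite (negPf b_even).
  have lt_q : b.+1 < m by rewrite /=; lia.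
  move/(_ lt_q); have -> : Ordinal lt_q = q by apply: val_inj => /=; lia.
  by rewrite sq; lia.
have : s b <> j.*2.+2 :> nat by move=> e; move: b_odd; rewrite e /= odd_double.
lia.
Qed.

Lemma top_pair_start (q : 'I_m) (h : q.+1 < m) :
  s q = j.*2.+1 :> nat -> s (Ordinal h) = j.*2 :> nat -> q = j.*2 :> nat.
Proof.
move=> sq sp; have q_ge : j.*2 <= q by rewrite -partner_on_ge sq.
case: (ltnP j.*2 q) => [q_gt|]; last lia.
have lt_b : q.-1 < m by have := ltn_ord q; lia.
have b_gt := top_pair_pred_large lt_b sq sp q_gt; set b := Ordinal lt_b in b_gt.
have [r sr] := perm_val_surj s (leq_ltn_trans (leq_pred _) (ltn_ord (s b))).
have r_ge : j.*2 <= r by rewrite -partner_on_ge sr; lia.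
have pos_ne (x : 'I_m) : s r <> s x :> nat -> r <> x :> nat.
  by move=> ne /val_inj rx; apply: ne; rewrite rx.
have r_ne_b : r <> q.-1 :> nat := pos_ne b ltac:(lia).
have r_ne_q : r <> q :> nat := pos_ne q ltac:(lia).
have r_ne_p : r <> q.+1 :> nat := pos_ne (Ordinal h) ltac:(lia).
case: (ltnP r q.-1) => [lt_rb|ge_rb].
  by case: avoid231; apply: (contains231 (x := r) (y := b) (z := Ordinal h)) => /=; lia.
case: (ltnP q.+1 r) => [lt_pr|le_rp]; last lia.
case: avoid4213.
by apply: (contains4213 (w := b) (x := q) (y := Ordinal h) (z := r)) => /=; lia.
Qed.

Lemma partner_on_succ : partner_on s j.*2.+2.
Proof.
move=> i lt_i; case: (ltnP i j.*2) => [/prefix //|ge_i].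
have [q [h [sq sp]]] := top_pair_adjacent.
have q_eq := top_pair_start sq sp.
have [i_q|i_p] : i = q :> nat \/ i = q.+1 :> nat by lia.
  by rewrite (val_inj i_q) sq /partner q_eq odd_double.
have -> : i = Ordinal h by exact: val_inj.
by rewrite sp /partner /= q_eq odd_double.
Qed.

End DumontStep.

End PartnerPrefix.

Lemma dumont_avoiding_partner_on m (s : 'S_m) j :
  dumont1 s -> avoids_pat s pat231 -> avoids_pat s pat4213 ->
  j.*2 <= m -> partner_on s j.*2.
Proof.
move=> dumont avoid231 avoid4213; elim: j => [_ i //|j IHj]; rewrite doubleS => room.
have le_prefix : j.*2 <= m by apply: ltnW; apply: ltnW.
exact: partner_on_succ le_prefix (IHj le_prefix) dumont room avoid231 avoid4213.
Qed.

Section PartnerPermutation.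

Variables (m : nat) (s : 'S_m).
Hypothesis s_partner : forall i : 'I_m, s i = partner i :> nat.

Lemma partner_perm_dumont : ~~ odd m -> dumont1 s.
Proof.
move=> even_m i; rewrite s_partner odd_partner; case: (boolP (odd i)) => /= odd_i.
  by move=> h; rewrite s_partner /partner /= odd_i /=; lia.
have lt_i : i.+1 < m.
  have := odd_double_half i; have := odd_double_half m; have := ltn_ord i.
  by rewrite (negPf odd_i) (negPf even_m) /=; lia.
by exists lt_i; rewrite s_partner /partner /= (negPf odd_i).
Qed.

Lemma partner_perm_avoids tau a b c :
  a < b -> b < c -> c < size tau -> nth 0 tau c < nth 0 tau a -> avoids_pat s tau.
Proof.
move=> lt_ab lt_bc lt_c tau_ca /(contains_pat_far_inversion lt_ab lt_bc lt_c tau_ca).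
move=> [x [z [lt_xz]]]; rewrite !s_partner => /(partner_inversion_adjacent (ltnW lt_xz)).
lia.
Qed.

End PartnerPermutation.

Theorem theorem3p8 (n : nat) (hn : 1 <= n) (s : 'S_(n.*2)) :
  (dumont1 s /\ avoids_pat s pat231 /\ avoids_pat s pat4213) <->
  (forall i : 'I_(n.*2), val (s i) = (if odd i then i.-1 else i.+1)).
Proof.
split=> [[dumont [avoid231 avoid4213]] i | s_partner].
  exact: (dumont_avoiding_partner_on dumont avoid231 avoid4213 (leqnn _) (ltn_ord i)).
split; first by apply: (partner_perm_dumont s_partner); rewrite odd_double.
by split; apply: (partner_perm_avoids s_partner (a := 0) (b := 1) (c := 2)).
Qed.
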